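(* (1) Let $t,y_2,y_3,y_4,\dots$ be independent indeterminates and set $y_0=t$, $y_1=1$, and $y_{-i}=-y_i$ for all $i\ge1$ (so $y_{-1}=-1$). For integers $a\le b$ write $Q(a,b)=P(\tilde T_a\cup\dots\cup\tilde T_b)/(y_ay_{a+1}\cdots y_b)$. Then: (a) for every $j\ge0$, $\lim_{t\to0}Q(-j,j+1)=y_{j+2}$ (i.e. the graph $H_j=\tilde T_{-j}\cup\dots\cup\tilde T_{j+1}$, with an even number of tiles centered at $\tilde T_0\cup\tilde T_1$, corresponds to $y_{j+2}$); (b) for every $k\ge0$, $\lim_{t\to0}Q(1-k,1+k)=1$ (any graph with an odd number of tiles centered at $\tilde T_1$ corresponds to $1$). (2) Analogously, fix an integer $N$, let $s$ and $y_k$ ($k\le N-1$) be independent indeterminates, and set $y_N=1$, $y_{N+1}=s$, $y_{N+1+k}=-y_{N+1-k}$ for all $k\ge1$. Then for every $k\ge0$, $\lim_{s\to0}P(\tilde T_{N-k}\cup\dots\cup\tilde T_{N+k})/(y_{N-k}\cdots y_{N+k})=1$ (any graph with an odd number of tiles centered at $\tilde T_N$ corresponds to $1$).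
   Context: For $k\in\mathbb{Z}$, the tile $\tilde T_k$ is a square whose northern edge has weight $y_{k+1}$, southern edge weight $y_{k-1}$, and eastern and western edges weight $1$. For $a\le b$, $\tilde T_a\cup\dots\cup\tilde T_b$ denotes the ladder graph of the tiles $\tilde T_a,\dots,\tilde T_b$ in this order: vertices $u_0,\dots,u_m,v_0,\dots,v_m$ with $m=b-a+1$, edges $u_{k-1}u_k$ of weight $y_{a+k}$ (north edge of $\tilde T_{a+k-1}$), $v_{k-1}v_k$ of weight $y_{a+k-2}$ (south edge of $\tilde T_{a+k-1}$), for $1\le k\le m$, and $u_kv_k$ of weight $1$ for $0\le k\le m$. $P(G)=\sum_M\prod_{e\in M}w_e$ over perfect matchings $M$ of $G$. The limits are taken after substituting the given specializations; the variables $y_0$ (resp. $y_{N+1}$) are kept as the formal variable $t$ (resp. $s$) and sent to $0$ at the end. *)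

From HB Require Import structures.
From mathcomp Require Import all_boot all_order all_algebra.
From mathcomp Require Import all_classical all_reals all_analysis.
Set Implicit Arguments. Unset Strict Implicit. Unset Printing Implicit Defensive.
Import Order.TTheory GRing.Theory Num.Theory.
Local Open Scope ring_scope.

(* Ladder graph of the m tiles  T_a, T_(a+1), ..., T_(a+m-1)
   (so b = a + m - 1), with edge weights given by y : int -> R.
   Vertices: (true, k) = u_k, (false, k) = v_k, for 0 <= k <= m. *)
Definition lvertex (m : nat) := (bool * 'I_m.+1)%type.

(* Edges: inl (inl i) = north edge u_i u_(i+1)  (i = k-1, 0 <= i < m),
          inl (inr i) = south edge v_i v_(i+1),
          inr k       = rung u_k v_k. *)
Definition ledge (m : nat) := (('I_m + 'I_m) + 'I_m.+1)%type.

Definition lincident (m : nat) (e : ledge m) (x : lvertex m) : bool :=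
  match e with
  | inl (inl i) => x.1 && ((x.2 == i :> nat) || (x.2 == i.+1 :> nat))
  | inl (inr i) => ~~ x.1 && ((x.2 == i :> nat) || (x.2 == i.+1 :> nat))
  | inr k => x.2 == k
  end.

Definition lweight (R : ringType) (y : int -> R) (a : int) (m : nat)
    (e : ledge m) : R :=
  match e with
  | inl (inl i) => y (a + (i : nat)%:Z + 1)
  | inl (inr i) => y (a + (i : nat)%:Z - 1)
  | inr _ => 1
  end.

Definition perfect_matching (m : nat) (M : {set ledge m}) : bool :=
  [forall x : lvertex m, #|[set e in M | lincident e x]| == 1%N].

Definition Pladder (R : comRingType) (y : int -> R) (a : int) (m : nat) : R :=
  \sum_(M : {set ledge m} | perfect_matching M) \prod_(e in M) lweight y a e.

Definition Qladder (R : fieldType) (y : int -> R) (a : int) (m : nat) : R :=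
  Pladder y a m / \prod_(i < m) y (a + (i : nat)%:Z).

(* Specialization (1): y_0 = t, y_1 = 1, y_n = z n for n >= 2,
   y_(-i) = - y_i for i >= 1. *)
Definition ypos (R : ringType) (t : R) (z : nat -> R) (n : nat) : R :=
  match n with 0%N => t | 1%N => 1 | _ => z n end.

Definition yspec1 (R : ringType) (t : R) (z : nat -> R) (k : int) : R :=
  match k with
  | Posz n => ypos t z n
  | Negz n => - ypos t z n.+1
  end.

(* Specialization (2): y_k = w k for k <= N-1, y_N = 1, y_(N+1) = s,
   y_(N+1+k) = - y_(N+1-k) for k >= 1. *)
Definition ybase2 (R : ringType) (N : int) (w : int -> R) (k : int) : R :=
  if k == N then 1 else w k.

Definition yspec2 (R : ringType) (N : int) (s : R) (w : int -> R) (k : int) : R :=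
  if k <= N then ybase2 N w k
  else if k == N + 1 then s
  else - ybase2 N w (2 * (N + 1) - k).

From HB Require Import structures.
From mathcomp Require Import all_boot all_order all_algebra.
From mathcomp Require Import all_classical all_reals all_analysis.
From mathcomp Require Import zify ring.
Set Implicit Arguments. Unset Strict Implicit. Unset Printing Implicit Defensive.
Import Order.TTheory GRing.Theory Num.Theory.
Import numFieldNormedType.Exports.
Local Open Scope classical_set_scope.
Local Open Scope ring_scope.

(* Adding a tile to a ladder uses either its rung or both of its horizontal
   edges, so [P(T_a u ... u T_b)] is the continuant of the tile weights
   [c_i = y_(i+1) y_(i-1)].  In the first specialization [c_0 = -1],
   [c_(1) = t y_2 = - c_(-1)] and [c_(-i) = c_i] for [i >= 2]; across the center
   the continuant is therefore [t y_2] times a Casoratian of two [t]-free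
   solutions of the recurrence, up to [O(t^2)], while [y_0 = t] occurs once in
   the denominator.  The Casoratian is the product of the [-c_i], which matches
   the [t]-free part of [y_a ... y_b].  The second specialization is the first
   one reflected about [N + 1], and reflection preserves the ladder. *)

Section Continuant.
Variable R : comPzRingType.
Implicit Types (c d : int -> R) (a b : int) (v : R * R).

(* [cont c a (p, q) n] is [(K_n, K_(n-1))] for the recurrence
   [K_(k+1) = K_k + c_(a+k) K_(k-1)] started at [K_0 = p], [K_(-1) = q]. *)
Fixpoint cont c a v n : R * R :=
  if n is n'.+1 then
    let p := cont c a v n' in (p.1 + c (a + n'%:Z) * p.2, p.1)
  else v.

Lemma contS c a v n :
  cont c a v n.+1 = ((cont c a v n).1 + c (a + n%:Z) * (cont c a v n).2, (cont c a v n).1).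
Proof. by []. Qed.

Lemma cont_cat c a v m n : cont c a v (m + n) = cont c (a + m%:Z) (cont c a v m) n.
Proof. by elim: n => [|n IH]; rewrite ?addn0 // addnS !contS IH PoszD addrA. Qed.

Lemma cont_linear c a p q n : cont c a (p, q) n =
  (p * (cont c a (1, 0) n).1 + q * (cont c a (0, 1) n).1,
   p * (cont c a (1, 0) n).2 + q * (cont c a (0, 1) n).2).
Proof. by elim: n => [|n IH] /=; [|rewrite IH /=]; congr pair; ring. Qed.

Lemma eq_cont c d a b v n :
  (forall k, (k < n)%N -> c (a + k%:Z) = d (b + k%:Z)) -> cont c a v n = cont d b v n.
Proof.
elim: n => [|n IH] cd //=.
by rewrite IH ?cd // => k /ltnW; apply: cd.
Qed.

Lemma cont_unfold_first c a n : cont c a (1, 1) n.+2 =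
  ((cont c (a + 1) (1, 1) n.+1).1 + c a * (cont c (a + 2) (1, 1) n).1,
   (cont c (a + 1) (1, 1) n.+1).2 + c a * (cont c (a + 2) (1, 1) n).2).
Proof.
rewrite -[n.+2]/(1 + n.+1)%N cont_cat.
have -> : cont c a (1, 1) 1 = (1 + c a, 1) by rewrite /= addr0 mulr1.
rewrite (_ : a + 1%N%:Z = a + 1) // cont_linear [cont c (a + 1) (1, 1) _]cont_linear.
have -> : cont c (a + 1) (1, 0) n.+1 = cont c (a + 2) (1, 1) n.
  rewrite -[n.+1]/(1 + n)%N cont_cat -addrA.
  by have -> : cont c (a + 1) (1, 0) 1 = (1, 1) by rewrite /= mulr0 addr0.
by rewrite /=; congr pair; ring.
Qed.

Lemma cont_rev c e n : cont c (e - n%:Z) (1, 1) n =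
  ((cont (fun i => c (- i)) (1 - e) (1, 1) n).1,
   (cont (fun i => c (- i)) (1 - e) (1, 0) n).1).
Proof.
set d := fun i => c (- i).
suff [] : cont c (e - n%:Z) (1, 1) n =
    ((cont d (1 - e) (1, 1) n).1, (cont d (1 - e) (1, 0) n).1) /\
  cont c (e - n.+1%:Z) (1, 1) n.+1 =
    ((cont d (1 - e) (1, 1) n.+1).1, (cont d (1 - e) (1, 0) n.+1).1) by [].
elim: n => [|n [IH1 IH2]].
  split; first by rewrite subr0.
  by rewrite /= /d !addr0 !mulr1 !mulr0 !addr0; congr (_ + c _, _); lia.
split; first exact: IH2.
rewrite cont_unfold_first.
have -> : e - n.+2%:Z + 1 = e - n.+1%:Z by lia.
have -> : e - n.+2%:Z + 2 = e - n%:Z by lia.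
rewrite IH1 IH2 /= /d.
by have -> : - (1 - e + n.+1%:Z) = e - n.+2%:Z by lia.
Qed.

Definition contU c a n := (cont c a (1, 0) n).1.
Definition contV c a n := (cont c a (0, 1) n).1.

Definition casoratian c a n := contV c a n * contU c a n.+1 - contU c a n * contV c a n.+1.

Lemma casoratian_prod c a n : casoratian c a n = \prod_(i < n.+1) - c (a + i%:Z).
Proof.
elim: n => [|n IH]; first by rewrite big_ord1 /casoratian /contU /contV /= !addr0; ring.
rewrite big_ord_recr -IH /casoratian /contU /contV [cont _ _ _ n.+2]contS.
by rewrite [cont _ _ (0, 1) n.+2]contS /=; ring.
Qed.

Lemma casoratian_skip c a n :
  contV c a n * contU c a n.+2 - contU c a n * contV c a n.+2 = casoratian c a n.
Proof.
by rewrite /casoratian /contU /contV [cont _ _ _ n.+2]contS [cont _ _ (0, 1) n.+2]contS /=; ring.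
Qed.

Section SymmetricCenter.
Variables (c : int -> R) (o : int) (x : R).
Hypotheses (c_center : c o = -1) (c_right : c (o + 1) = x).

Lemma cont_from_center m : (cont c o (1, 1) m.+2).1 = x * contU c (o + 2) m.
Proof.
rewrite -[m.+2]/(2 + m)%N cont_cat.
have -> : cont c o (1, 1) 2 = (x, 0).
  by rewrite /= !addr0 !mulr1 c_center (_ : o + 1%N%:Z = o + 1) // c_right; congr pair; ring.
by rewrite cont_linear /contU /=; ring.
Qed.

Hypotheses (c_left : c (o - 1) = - x)
  (c_sym : forall i : nat, c (o - i.+2%:Z) = c (o + i.+2%:Z)).

(* Around [o] the coefficients read [.., c_(o+3), c_(o+2), -x, -1, x, c_(o+2), c_(o+3), ..]:
   the left block is the reversed right block and the middle contributes a factor [x]. *)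
Lemma cont_across_center n m : (cont c (o - n.+1%:Z) (1, 1) (n + 3 + m)).1 =
  x * (contV c (o + 2) n * contU c (o + 2) m - contU c (o + 2) n * contV c (o + 2) m)
  - x ^+ 2 * contU c (o + 2) n * contU c (o + 2) m.
Proof.
have sym k : c (- (1 - (o - 1) + k%:Z)) = c (o + 2 + k%:Z).
  have -> : - (1 - (o - 1) + k%:Z) = o - k.+2%:Z by lia.
  by rewrite c_sym; congr c; lia.
have left_block : cont c (o - n.+1%:Z) (1, 1) n =
    (contU c (o + 2) n + contV c (o + 2) n, contU c (o + 2) n).
  rewrite (_ : o - n.+1%:Z = (o - 1) - n%:Z); last by lia.
  have reflected v :=
    @eq_cont (fun i => c (- i)) c (1 - (o - 1)) (o + 2) v n (fun k _ => sym k).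
  by rewrite cont_rev !reflected cont_linear /= !mul1r.
rewrite !cont_cat left_block.
rewrite (_ : o - n.+1%:Z + n%:Z = o - 1); last by lia.
rewrite (_ : o - n.+1%:Z + (n + 3)%N%:Z = o + 2); last by lia.
rewrite /= !addr0 (_ : o - 1 + 1 = o); last by lia.
rewrite (_ : o - 1 + 2 = o + 1); last by lia.
by rewrite c_left c_center c_right cont_linear /contU /contV /=; ring.
Qed.

End SymmetricCenter.

End Continuant.

Definition tile_weight (R : pzRingType) (y : int -> R) (i : int) := y (i + 1) * y (i - 1).

Lemma sum_pair (R : nmodType) (I J : finType) (F : I * J -> R) :
  \sum_(p : I * J) F p = \sum_(i : I) \sum_(j : J) F (i, j).
Proof. by rewrite pair_bigA; apply: eq_bigr => -[]. Qed.

Section LadderMatchings.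
Variables (R : comNzRingType) (y : int -> R) (a : int).

Definition ldegree m (M : {set ledge m}) (x : lvertex m) := #|[set e in M | lincident e x]|.

Definition end_matching m (st : nat) (M : {set ledge m}) :=
  [forall x : lvertex m, ldegree M x == (if (x.2 : nat) == m then st else 1%N)].

Definition Pend m st :=
  \sum_(M : {set ledge m} | end_matching st M) \prod_(e in M) lweight y a e.

(* Adds one tile: [b] tells whether the new north edge, south edge and rung are used. *)
Definition ladder_extend m (M : {set ledge m}) (b : bool * (bool * bool)) : {set ledge m.+1} :=
 [set e | match e with
   | inl (inl i) => if unlift ord_max i is Some j then inl (inl j) \in M else b.1
   | inl (inr i) => if unlift ord_max i is Some j then inl (inr j) \in M else b.2.1
   | inr k => if unlift ord_max k is Some j then inr j \in M else b.2.2 end].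

Lemma lift_max_widen n (j : 'I_n) : lift ord_max j = widen_ord (leqnSn n) j.
Proof. by apply: val_inj => /=; rewrite /bump leqNgt ltn_ord. Qed.

Lemma unlift_widen n (j : 'I_n) : unlift ord_max (widen_ord (leqnSn n) j) = Some j.
Proof. by rewrite -lift_max_widen liftK. Qed.

Lemma widen_ord_eq n (j k : 'I_n) :
  (widen_ord (leqnSn n) j == widen_ord (leqnSn n) k) = (j == k).
Proof. by rewrite -val_eqE val_eqE. Qed.

Lemma ldegree_sum m (M : {set ledge m}) x :
  ldegree M x = (\sum_(i < m) ((inl (inl i) \in M) && lincident (inl (inl i)) x)
          + \sum_(i < m) ((inl (inr i) \in M) && lincident (inl (inr i)) x)
          + \sum_(k < m.+1) ((inr k \in M) && lincident (inr k) x))%N.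
Proof.
rewrite /ldegree -sum1dep_card big_mkcond !big_sumType /=.
by congr (_ + _ + _)%N; apply: eq_bigr => i _; case: (_ && _).
Qed.

Section Extend.
Variables (m : nat) (M : {set ledge m}) (bn bs br : bool).
Let b := (bn, (bs, br)).

Lemma north_sum_extend x :
  (\sum_(i < m.+1) ((inl (inl i) \in ladder_extend M b) && lincident (inl (inl i)) x))%N =
  (\sum_(i < m) ((inl (inl i) \in M) && lincident (inl (inl (widen_ord (leqnSn m) i))) x)
   + (bn && lincident (inl (inl ord_max)) x))%N.
Proof.
rewrite big_ord_recr /= inE /= unlift_none; congr (_ + _)%N.
by apply: eq_bigr => i _; rewrite inE /= unlift_widen.
Qed.

Lemma south_sum_extend x :
  (\sum_(i < m.+1) ((inl (inr i) \in ladder_extend M b) && lincident (inl (inr i)) x))%N =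
  (\sum_(i < m) ((inl (inr i) \in M) && lincident (inl (inr (widen_ord (leqnSn m) i))) x)
   + (bs && lincident (inl (inr ord_max)) x))%N.
Proof.
rewrite big_ord_recr /= inE /= unlift_none; congr (_ + _)%N.
by apply: eq_bigr => i _; rewrite inE /= unlift_widen.
Qed.

Lemma rung_sum_extend x :
  (\sum_(i < m.+2) ((inr i \in ladder_extend M b) && lincident (inr i) x))%N =
  (\sum_(i < m.+1) ((inr i \in M) && lincident (inr (widen_ord (leqnSn m.+1) i)) x)
   + (br && lincident (inr ord_max) x))%N.
Proof.
rewrite big_ord_recr /= inE /= unlift_none; congr (_ + _)%N.
by apply: eq_bigr => i _; rewrite inE /= unlift_widen.
Qed.

Lemma ldegree_extend_old b0 (k : 'I_m.+1) :
  ldegree (ladder_extend M b) (b0, widen_ord (leqnSn _) k) =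
  (ldegree M (b0, k) + (if (k : nat) == m then (if b0 then bn else bs) else false))%N.
Proof.
rewrite !ldegree_sum north_sum_extend south_sum_extend rung_sum_extend /=.
have -> : (\sum_(i < m.+1) ((inr i \in M) &&
       (widen_ord (leqnSn m.+1) k == widen_ord (leqnSn m.+1) i)))%N =
    (\sum_(i < m.+1) ((inr i \in M) && (k == i)))%N.
  by apply: eq_bigr => i _; rewrite widen_ord_eq.
have -> : (widen_ord (leqnSn m.+1) k == ord_max) = false.
  by apply/negbTE; rewrite -val_eqE /= neq_ltn ltn_ord.
rewrite (ltn_eqF (ltn_ord k)) !orbF.
case: b0; case: bn; case: bs; case: (k == m :> nat); rewrite /= ?andbF ?andbT; lia.
Qed.

Lemma ldegree_extend_new b0 :
  ldegree (ladder_extend M b) (b0, ord_max) = ((if b0 then bn else bs) + br)%N.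
Proof.
rewrite !ldegree_sum north_sum_extend south_sum_extend rung_sum_extend /=.
rewrite !big1 //=.
- by rewrite !eqxx andbT; case: b0; case: bn; case: bs => /=; lia.
- move=> i _; have Hi := ltn_ord i.
  rewrite (_ : (ord_max == _) = false) ?andbF //; apply/negbTE.
  by rewrite -val_eqE /=; lia.
- move=> i _; have Hi := ltn_ord i.
  rewrite (_ : (m.+1 == i) = false); last by lia.
  by rewrite (_ : (m.+1 == i.+1) = false) ?andbF //; lia.
- move=> i _; have Hi := ltn_ord i.
  rewrite (_ : (m.+1 == i) = false); last by lia.
  by rewrite (_ : (m.+1 == i.+1) = false) ?andbF //; lia.
Qed.

Lemma end_matching_extend st :
  end_matching st (ladder_extend M b) = [&& bn == bs, (bn + br == st)%N & end_matching (1 - bn) M].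
Proof.
apply/idP/idP.
- move/forallP => H.
  have := H (true, ord_max); have := H (false, ord_max).
  rewrite !ldegree_extend_new /= eqxx => Hs Hn.
  have Hbb : bn == bs by move: Hn Hs; case: bn; case: bs; case: br => /= /eqP <-.
  rewrite Hbb Hn /=; apply/forallP => -[b0 k].
  have := H (b0, widen_ord (leqnSn _) k).
  rewrite ldegree_extend_old /= (_ : ((k : nat) == m.+1) = false); last by have := ltn_ord k; lia.
  move: Hbb => /eqP <-.
  case: (k == m :> nat); last by rewrite addn0.
  by case: b0; case: bn; rewrite /= ?addn0 ?addn1 ?subn0 ?subnn.
- case/and3P => /eqP Hbb Hst /forallP H; apply/forallP => -[b0 k'].
  case: (unliftP ord_max k') => [j ->|->].
  + rewrite lift_max_widen ldegree_extend_old /=.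
    rewrite (_ : ((j : nat) == m.+1) = false); last by have := ltn_ord j; lia.
    have := H (b0, j); rewrite /= -Hbb.
    case: (j == m :> nat); last by rewrite addn0.
    by case: b0; case: bn; rewrite /= ?addn0 ?addn1 ?subn0 ?subnn.
  + by rewrite ldegree_extend_new /= eqxx -Hbb; case: b0.
Qed.

Lemma weight_extend : \prod_(e in ladder_extend M b) lweight y a e =
  \prod_(e in M) lweight y a e * (if bn then y (a + m%:Z + 1) else 1)
    * (if bs then y (a + m%:Z - 1) else 1).
Proof.
rewrite big_mkcond [in RHS]big_mkcond !big_sumType /=.
rewrite [X in _ * X = _]big1; last by move=> k _; case: ifP.
rewrite [X in _ = _ * X * _ * _]big1; last by move=> k _; case: ifP.
rewrite !big_ord_recr /=.
have old_edges (f : 'I_m -> ledge m) (f' : 'I_m.+1 -> ledge m.+1) :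
  (forall i, f' (widen_ord (leqnSn m) i) \in ladder_extend M b = (f i \in M)) ->
  (forall i, lweight y a (f' (widen_ord (leqnSn m) i)) = lweight y a (f i)) ->
  \prod_(i < m) (if f' (widen_ord (leqnSn m) i) \in ladder_extend M b
                 then lweight y a (f' (widen_ord (leqnSn m) i)) else 1) =
  \prod_(i < m) (if f i \in M then lweight y a (f i) else 1).
  by move=> Ein Ew; apply: eq_bigr => i _; rewrite Ein Ew.
rewrite (old_edges (fun i => inl (inl i)) (fun i => inl (inl i))) //; last first.
  by move=> i; rewrite inE /= unlift_widen.
rewrite (old_edges (fun i => inl (inr i)) (fun i => inl (inr i))) //; last first.
  by move=> i; rewrite inE /= unlift_widen.
rewrite !inE /= !unlift_none /= mulr1 -!mulrA; congr (_ * _).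
by rewrite mulrCA mul1r.
Qed.

End Extend.

Definition ledge_widen m (e : ledge m) : ledge m.+1 :=
  match e with
  | inl (inl i) => inl (inl (lift ord_max i))
  | inl (inr i) => inl (inr (lift ord_max i))
  | inr k => inr (lift ord_max k)
  end.

Lemma ladder_extend_bij m :
  bijective (fun p : {set ledge m} * (bool * (bool * bool)) => ladder_extend p.1 p.2).
Proof.
exists (fun M' : {set ledge m.+1} => ([set e | ledge_widen e \in M']%SET,
  (inl (inl ord_max) \in M', (inl (inr ord_max) \in M', inr ord_max \in M')))).
- move=> [M [bn [bs br]]] /=; congr pair.
    by apply/setP => -[[i|i]|k]; rewrite !inE /= liftK.
  by rewrite !inE /= !unlift_none.
- move=> M'; apply/setP => -[[i|i]|k]; rewrite !inE /=;
  by case: unliftP => [j ->|->]; rewrite ?inE.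
Qed.

Lemma Pend_extend m st : Pend m.+1 st = \sum_(M : {set ledge m}) \sum_(b : bool * (bool * bool))
  (if end_matching st (ladder_extend M b) then \prod_(e in ladder_extend M b) lweight y a e else 0).
Proof.
rewrite /Pend (reindex (fun p : {set ledge m} * (bool * (bool * bool)) => ladder_extend p.1 p.2)) /=;
  last by apply: onW_bij; exact: ladder_extend_bij.
by rewrite big_mkcond sum_pair.
Qed.

Lemma Pend_perfectS m : Pend m.+1 1 = Pend m 1 + tile_weight y (a + m%:Z) * Pend m 0.
Proof.
rewrite Pend_extend /Pend mulr_sumr (big_mkcond (end_matching 1)) (big_mkcond (end_matching 0)).
rewrite -big_split /=; apply: eq_bigr => M _.
rewrite sum_pair !big_bool !sum_pair !big_bool /= !end_matching_extend !weight_extend /= /tile_weight.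
by case: (end_matching 1 M); case: (end_matching 0 M) => /=; ring.
Qed.

Lemma Pend_openS m : Pend m.+1 0 = Pend m 1.
Proof.
rewrite Pend_extend /Pend (big_mkcond (end_matching 1)) /=; apply: eq_bigr => M _.
rewrite sum_pair !big_bool !sum_pair !big_bool /= !end_matching_extend !weight_extend /=.
by case: (end_matching 1 M) => /=; ring.
Qed.

Lemma end_matching0 st (M : {set ledge 0}) : end_matching st M = ((inr ord0 \in M) == st :> nat).
Proof.
have deg x : ldegree M x = (inr ord0 \in M) :> nat.
  by rewrite ldegree_sum !big_ord0 big_ord1 /=; case: x => b0 k; rewrite (ord1 k) eqxx andbT.
by apply/forallP/idP => [/(_ (true, ord0))|H [b0 k]]; rewrite deg // (ord1 k).
Qed.

Lemma Pend0 st : Pend 0 st = ((1%N == st)%:R + (0%N == st)%:R : R).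
Proof.
rewrite /Pend (reindex (fun b : bool => if b then [set inr ord0]%SET else finset.set0)) /=; last first.
  apply: onW_bij; exists (fun M : {set ledge 0} => inr ord0 \in M).
    by case; rewrite ?inE ?eqxx.
  move=> M; apply/setP => -[[i|i]|k]; try by case: i.
  by rewrite (ord1 k); case: ifP => H; rewrite ?inE ?eqxx ?H.
rewrite big_mkcond big_bool /= !end_matching0 !inE ?eqxx /= big_set1 big_set0.
by case: (1%N == st); case: (0%N == st).
Qed.

Lemma Pend_cont m : (Pend m 1, Pend m 0) = cont (tile_weight y) a (1, 1) m.
Proof.
elim: m => [|m IH]; first by rewrite !Pend0 /= addr0 add0r.
by rewrite contS -IH /= Pend_perfectS Pend_openS.
Qed.

End LadderMatchings.

Lemma Pladder_cont (R : comNzRingType) (y : int -> R) a m :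
  Pladder y a m = (cont (tile_weight y) a (1, 1) m).1.
Proof.
rewrite -Pend_cont /Pladder /Pend; apply: eq_bigl => M.
by apply: eq_forallb => x; rewrite if_same.
Qed.

Definition yprod (R : comPzSemiRingType) (y : int -> R) (a : int) (m : nat) :=
  \prod_(i < m) y (a + i%:Z).

Lemma yprodSr (R : comPzSemiRingType) (y : int -> R) a m :
  yprod y a m.+1 = yprod y a m * y (a + m%:Z).
Proof. by rewrite /yprod big_ord_recr. Qed.

Lemma yprodSl (R : comPzSemiRingType) (y : int -> R) a m :
  yprod y a m.+1 = y a * yprod y (a + 1) m.
Proof.
rewrite /yprod big_ord_recl addr0; congr (_ * _); apply: eq_bigr => i _.
by congr y; rewrite /= -addrA; congr (_ + _); lia.
Qed.

Lemma yprod_factor_out (R : comPzSemiRingType) (y y' : int -> R) a m (i : 'I_m) :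
  (forall k, k != a + i%:Z -> y k = y' k) -> y' (a + i%:Z) = 1 ->
  yprod y a m = y (a + i%:Z) * yprod y' a m.
Proof.
move=> yy' y'1; rewrite /yprod (bigD1 i) //= [X in _ = _ * X](bigD1 i) //= y'1 mul1r.
congr (_ * _); apply: eq_bigr => j ji; apply: yy'.
by apply: contra ji => /eqP /addrI [] ij; apply/eqP/val_inj.
Qed.

Lemma yprod_reflect (R : comPzSemiRingType) (y : int -> R) (b a : int) m :
  yprod (fun i => y (b - i)) a m = yprod y (b - a - m%:Z + 1) m.
Proof.
rewrite /yprod (reindex_inj rev_ord_inj) /=; apply: eq_bigr => i _.
by congr y; have := ltn_ord i; lia.
Qed.

Lemma Qladder_yprod (R : fieldType) (y : int -> R) a m :
  Qladder y a m = Pladder y a m / yprod y a m.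
Proof. by []. Qed.

Lemma Pladder_reflect (R : comNzRingType) (y : int -> R) (b a : int) m :
  Pladder (fun i => y (b - i)) a m = Pladder y (b - a - m%:Z + 1) m.
Proof.
rewrite !Pladder_cont (_ : b - a - m%:Z + 1 = (b - a + 1) - m%:Z); last by lia.
rewrite (congr1 fst (cont_rev _ _ _)) /=; congr (_).1; apply: eq_cont => k _.
rewrite /tile_weight mulrC; congr (y _ * y _); lia.
Qed.

Lemma Qladder_reflect (R : fieldType) (y : int -> R) (b a : int) m :
  Qladder (fun i => y (b - i)) a m = Qladder y (b - a - m%:Z + 1) m.
Proof. by rewrite !Qladder_yprod Pladder_reflect yprod_reflect. Qed.

Lemma cvg_at0_affine_div (R : realType) (f : R -> R) (A B C : R) :
  (forall t, t != 0 -> f t = (A - t * B) / C) -> f t @[t --> (0 : R)^'] --> A / C.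
Proof.
move=> fE.
have near_fE : {near (0 : R)^', (fun t => A / C - t * (B / C)) =1 f}.
  near=> t; rewrite fE; last by near: t; exact: nbhs_dnbhs_neq.
  by rewrite mulrBl mulrA.
apply: cvg_trans (near_eq_cvg near_fE) _; apply: cvg_within_filter.
have : (fun t : R => A / C - t * (B / C)) @ (0 : R) --> A / C - 0 * (B / C).
  by apply: cvgB; [exact: cvg_cst | apply: cvgMr_tmp; exact: cvg_id].
by rewrite mul0r subr0.
Unshelve. all: by end_near.
Qed.

Section FirstSpecialization.
Variables (R : realType) (z : nat -> R).

Local Notation ys t := (yspec1 t z).
Local Notation c := (tile_weight (yspec1 1 z)).
Local Notation U := (contU c 2).
Local Notation V := (contV c 2).

Lemma yspec1_t_free t i : i != 0 -> ys t i = ys 1 i.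
Proof. by case: i => [[|[|n]]|n]. Qed.

Lemma cont_spec1_t_free t v n : cont (tile_weight (ys t)) 2 v n = cont c 2 v n.
Proof.
by apply: eq_cont => k _; rewrite /tile_weight !(@yspec1_t_free t) //; lia.
Qed.

Lemma Pladder_spec1_center t m : Pladder (ys t) 0 m.+2 = t * z 2 * U m.
Proof.
rewrite Pladder_cont (@cont_from_center _ _ _ (t * z 2)).
- by rewrite /contU cont_spec1_t_free.
- by rewrite /tile_weight add0r sub0r mul1r.
- by rewrite /tile_weight mulrC.
Qed.

Lemma Pladder_spec1 t n m : Pladder (ys t) (- n.+1%:Z) (n + 3 + m) =
  t * z 2 * (V n * U m - U n * V m) - (t * z 2) ^+ 2 * U n * U m.
Proof.
rewrite Pladder_cont -[- _]sub0r (@cont_across_center _ _ _ (t * z 2)).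
- by rewrite add0r /contU /contV !cont_spec1_t_free.
- by rewrite /tile_weight add0r sub0r mul1r.
- by rewrite /tile_weight mulrC.
- by rewrite /tile_weight sub0r addrC subrr mulrN.
- move=> i; rewrite /tile_weight sub0r add0r mulrC.
  have -> : - i.+2%:Z + 1 = - i.+1%:Z by lia.
  have -> : - i.+2%:Z - 1 = - i.+3%:Z by lia.
  have -> : i.+2%:Z + 1 = i.+3%:Z by lia.
  have -> : i.+2%:Z - 1 = i.+1%:Z by lia.
  exact: (mulrNN (ypos t z i.+3) (ypos t z i.+1)).
Qed.

Lemma yprod_spec1 t n m : (n < m)%N -> yprod (ys t) (- n%:Z) m = t * yprod (ys 1) (- n%:Z) m.
Proof.
move=> nm; rewrite (@yprod_factor_out _ _ (ys 1) _ _ (Ordinal nm)) /= addNr //.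
by move=> k k0; rewrite yspec1_t_free.
Qed.

Lemma casoratian_spec1 n :
  z 2 * casoratian c 2 n = z n.+3 * yprod (ys 1) (- n.+1%:Z) (n + 3 + n.+1).
Proof.
elim: n => [|n IH].
  rewrite casoratian_prod big_ord1 /yprod !big_ord_recr big_ord0 /= /tile_weight.
  by rewrite (_ : 2 + 0%N%:Z + 1 = 3%N%:Z) // (_ : 2 + 0%N%:Z - 1 = 1) //=; ring.
rewrite casoratian_prod big_ord_recr /= -casoratian_prod.
rewrite (_ : (n.+1 + 3 + n.+2 = (n + 3 + n.+1).+2)%N); last by lia.
rewrite yprodSl yprodSr.
rewrite (_ : - n.+2%:Z + 1 = - n.+1%:Z); last by lia.
rewrite (_ : - n.+1%:Z + (n + 3 + n.+1)%N%:Z = n.+3%:Z); last by lia.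
rewrite /tile_weight (_ : 2 + n.+1%:Z + 1 = n.+4%:Z); last by lia.
rewrite (_ : 2 + n.+1%:Z - 1 = n.+2%:Z); last by lia.
transitivity (- (z n.+4 * z n.+2) * (z 2 * casoratian c 2 n)); first by rewrite /=; ring.
by rewrite IH /=; ring.
Qed.

Hypothesis z_neq0 : forall n, (2 <= n)%N -> z n != 0.

Lemma yspec1_neq0 k : ys 1 k != 0.
Proof. by case: k => [[|[|n]]|[|n]] /=; rewrite ?oppr_eq0 ?oner_eq0 // z_neq0. Qed.

(* [y_0 = t] is the only vanishing factor of the denominator; it cancels the
   factor [t] of the numerator. *)
Lemma Qladder_spec1_cvg n m A B L : (n < m)%N ->
  (forall t, Pladder (ys t) (- n%:Z) m = t * z 2 * A - (t * z 2) ^+ 2 * B) ->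
  z 2 * A = L * yprod (ys 1) (- n%:Z) m ->
  Qladder (ys t) (- n%:Z) m @[t --> (0 : R)^'] --> L.
Proof.
move=> nm PE AL.
have C_neq0 : yprod (ys 1) (- n%:Z) m != 0 by apply/prodf_neq0 => i _; apply: yspec1_neq0.
rewrite -(mulfK C_neq0 L) -AL.
apply: (@cvg_at0_affine_div _ _ _ (z 2 ^+ 2 * B)) => t t0.
rewrite Qladder_yprod PE (yprod_spec1 t) //.
by field; rewrite t0 C_neq0.
Qed.

Lemma Qladder_spec1_even j :
  Qladder (ys t) (- j%:Z) (2 * j).+2 @[t --> (0 : R)^'] --> z j.+2.
Proof.
case: j => [|n].
  apply: (@Qladder_spec1_cvg _ _ 1 0) => // [t|].
    by rewrite Pladder_spec1_center /contU /=; ring.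
  by rewrite /yprod !big_ord_recr big_ord0 /=; ring.
rewrite (_ : (2 * n.+1).+2 = n + 3 + n.+1)%N; last by lia.
apply: (@Qladder_spec1_cvg _ _ (casoratian c 2 n) (U n * U n.+1)) => [|t|]; first by lia.
  by rewrite Pladder_spec1 /casoratian; ring.
by rewrite casoratian_spec1.
Qed.

Lemma Qladder_spec1_odd k :
  Qladder (ys t) (1 - k%:Z) (2 * k).+1 @[t --> (0 : R)^'] --> (1 : R).
Proof.
case: k => [|[|n]].
- have := @cvg_at0_affine_div R _ 1 (- z 2) 1; rewrite divr1; apply=> t _.
  rewrite Qladder_yprod Pladder_cont /yprod big_ord1 /= /tile_weight.
  by rewrite (_ : 1 - 0%N%:Z + 0%N%:Z = 1) //= !divr1 mulrN opprK mulr1 mulrC.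
- rewrite (_ : 1 - 1%N%:Z = - 0%N%:Z) //.
  apply: (@Qladder_spec1_cvg _ _ 1 0) => // [t|].
    by rewrite Pladder_spec1_center /contU /=; ring.
  by rewrite /yprod !big_ord_recr big_ord0 /=; ring.
rewrite (_ : 1 - n.+2%:Z = - n.+1%:Z); last by lia.
rewrite (_ : (2 * n.+2).+1 = n + 3 + n.+2)%N; last by lia.
apply: (@Qladder_spec1_cvg _ _ (casoratian c 2 n) (U n * U n.+2)) => [|t|]; first by lia.
  by rewrite Pladder_spec1 casoratian_skip; ring.
rewrite casoratian_spec1 (_ : n + 3 + n.+2 = (n + 3 + n.+1).+1)%N; last by lia.
rewrite yprodSr.
by rewrite (_ : - n.+1%:Z + (n + 3 + n.+1)%N%:Z = n.+3%:Z) /=; [ring | lia].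
Qed.

End FirstSpecialization.

Lemma yspec2_reflect (R : nzRingType) (N : int) (s : R) (w : int -> R) :
  yspec2 N s w = (fun i => yspec1 s (fun n => w (N + 1 - n%:Z)) (N + 1 - i)).
Proof.
apply/funext => i; rewrite -{1}(_ : N + 1 - (N + 1 - i) = i); last by lia.
move: (N + 1 - i) => j; rewrite /yspec2 /ybase2.
case: j => [[|[|n]]|[|n]] /=; do 3?[case: ifP => ?]; try by [].
all: try (exfalso; lia).
by congr (- w _); lia.
Qed.

Theorem lemma3 (R : realType) :
  (forall z : nat -> R, (forall n : nat, (2 <= n)%N -> z n != 0) ->
     (forall j : nat,
        (Qladder (yspec1 t z) (- (j : nat)%:Z) (2 * j).+2) @[t --> (0 : R)^']
          --> z j.+2) /\
     (forall k : nat,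
        (Qladder (yspec1 t z) (1 - (k : nat)%:Z) (2 * k).+1) @[t --> (0 : R)^']
          --> (1 : R))) /\
  (forall (N : int) (w : int -> R), (forall k : int, k <= N - 1 -> w k != 0) ->
     forall k : nat,
       (Qladder (yspec2 N s w) (N - (k : nat)%:Z) (2 * k).+1) @[s --> (0 : R)^']
         --> (1 : R)).
Proof.
split=> [z z_neq0 | N w w_neq0 k].
  by split; [exact: Qladder_spec1_even | exact: Qladder_spec1_odd].
have reflected s : Qladder (yspec2 N s w) (N - k%:Z) (2 * k).+1 =
    Qladder (yspec1 s (fun n => w (N + 1 - n%:Z))) (1 - k%:Z) (2 * k).+1.
  by rewrite yspec2_reflect Qladder_reflect; congr Qladder; lia.
rewrite (funext reflected); apply: Qladder_spec1_odd => n n2.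
by apply: w_neq0; lia.
Qed.
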